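(* (i) Let $\mathcal A$ be a finite set of matrices in $GL_2(\mathbb R)$ and let $\Phi$ be the IFS induced by $\mathcal A$ on $\mathbb{RP}^1$. If $\Phi$ satisfies the strong exponential separation condition on a nonempty set, then $\mathcal A$ is strongly Diophantine. (ii) Let $\mathcal A$ be a finite set of matrices in $SL_2(\mathbb R)$ and let $\Phi$ be the IFS induced by $\mathcal A$ on $\mathbb{RP}^1$. Then $\Phi$ satisfies the strong exponential separation condition on some set containing at least three points if and only if $\mathcal A$ is strongly Diophantine.
   Context: $\mathbb{RP}^1$ is identified with $\mathbb R/\pi\mathbb Z$ with its induced metric $d_{\mathbb P}$; $\varphi_A$ is the induced action of $A$. Write $\mathcal A=\{A_i\}_{i\in\Lambda}$, $A_{\mathbf i}=A_{i_1}\cdots A_{i_n}$, $\varphi_{\mathbf i}=\varphi_{A_{i_1}}\circ\cdots\circ\varphi_{A_{i_n}}$. $\Phi$ satisfies the strong exponential separation condition on $J$ if $\varphi_{\mathbf i}\equiv\varphi_{\mathbf j}$ only when $\mathbf i=\mathbf j$, and there is $c>0$ such that for all $n$ and $\mathbf i,\mathbf j\in\Lambda^n$ with $i_1\ne j_1$, $\sup_{x\in J}d_{\mathbb P}(\varphi_{\mathbf i}(x),\varphi_{\mathbf j}(x))>c^n$. $\mathcal A$ is strongly Diophantine if there is $c>0$ such that $\|A_{\mathbf i}-A_{\mathbf j}\|>c^n$ (operator norm) for all $n$ and $\mathbf i\ne\mathbf j\in\Lambda^n$. *)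

From HB Require Import structures.
From mathcomp Require Import all_boot all_order all_algebra.
From mathcomp Require Import all_classical all_reals all_analysis.
Set Implicit Arguments. Unset Strict Implicit. Unset Printing Implicit Defensive.
Import Order.TTheory GRing.Theory Num.Theory.
Local Open Scope classical_set_scope.
Local Open Scope ring_scope.

Section Defs.
Variable R : realType.

Definition vec2 (a b : R) : 'cV[R]_2 :=
  \col_(i < 2) (if i == ord0 then a else b).

Definition vnorm (v : 'cV[R]_2) : R :=
  Num.sqrt (v ord0 ord0 ^+ 2 + v ord_max ord0 ^+ 2).

Definition opnorm (M : 'M[R]_2) : R :=
  sup [set vnorm (M *m v) | v in [set v | vnorm v = 1]].

(* RP^1 identified with R / pi Z; points are represented by reals.
   The induced (quotient) metric: *)
Definition dP (x y : R) : R :=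
  inf [set `|x - y - k%:~R * pi| | k in [set: int]].

(* induced action of A on RP^1 = R / pi Z: the direction theta maps to
   (a representative of) the direction of A (cos theta, sin theta). *)
Definition phiA (A : 'M[R]_2) (t : R) : R :=
  xget 0 [set t' | exists l : R, l != 0 /\
        vec2 (cos t') (sin t') = l *: (A *m vec2 (cos t) (sin t))].

Variable L : finType.
Variable A : L -> 'M[R]_2.

Definition Aw (n : nat) (w : n.-tuple L) : 'M[R]_2 := \prod_(k <- w) A k.

Definition phiw (n : nat) (w : n.-tuple L) : R -> R :=
  foldr (fun k f => phiA (A k) \o f) id w.

Definition same_map (f g : R -> R) : Prop := forall x, dP (f x) (g x) = 0.

Definition strong_exp_sep (J : set R) : Prop :=
  (forall n (w1 w2 : n.-tuple L), same_map (phiw w1) (phiw w2) -> w1 = w2) /\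
  exists c : R, 0 < c /\
    forall n (w1 w2 : n.+1.-tuple L), thead w1 != thead w2 ->
      c ^+ n.+1 < sup [set dP (phiw w1 x) (phiw w2 x) | x in J].

Definition strongly_diophantine : Prop :=
  exists c : R, 0 < c /\
    forall n (w1 w2 : n.-tuple L), w1 != w2 ->
      c ^+ n < opnorm (Aw w1 - Aw w2).

End Defs.

Definition three_points (R : realType) (J : set R) : Prop :=
  exists x y z, [/\ J x, J y & J z] /\
    [/\ dP x y != 0, dP y z != 0 & dP x z != 0].

From HB Require Import structures.
From mathcomp Require Import all_boot all_order all_algebra.
From mathcomp Require Import all_classical all_reals all_analysis.
From mathcomp Require Import ring lra.
Import Order.TTheory GRing.Theory Num.Theory.
Import numFieldNormedType.Exports.
Set Implicit Arguments. Unset Strict Implicit. Unset Printing Implicit Defensive.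
Local Open Scope classical_set_scope.
Local Open Scope ring_scope.

(* If the directions of [P v] and [Q v] make the angle [theta], then
   [sin theta ^ 2 |P v|^2 |Q v|^2 = (P v x Q v)^2], and [dP] is comparable to
   [|sin|] of the difference of its arguments.
   (i) If two words [i], [j] differ in their first letter, separation at some
   point bounds the angle between [A_i v] and [A_j v] from below, hence also
   [|A_i - A_j|], because [|A_j v| >= |det A_j| / |A_j|].  A common first letter
   [A_k] is cancelled at the cost of a factor [det A_k^2 / |A_k|^2], so by
   induction [|A_i - A_j|] decays at most exponentially.
   (ii) For [SL_2] words, if [dP] is small at the directions [0], [pi/4] and
   [pi/2], then [N = A_i^-1 A_j] is nearly diagonal with determinant [1], hence
   close to [1] or to [-1].  Then [A_i - A_j], or [A_i A_i - A_j A_j =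
   A_i (A_i + A_j) - (A_i + A_j) A_j], is small, and the Diophantine bound for
   [i, j], or for [i i, j j], turns this into an exponential lower bound on
   [dP] at one of the three directions. *)

Lemma expn_lt_of_le_sqr (R : realFieldType) (r g y : R) n :
  0 < r -> r <= 1 -> 1 <= g -> 0 <= y -> r ^+ n.+1 <= g * y ^+ 2 ->
  (r / (2 * g)) ^+ n.+1 < y.
Proof.
move=> r_gt0 r_le1 g_ge1 y_ge0 le_y; set a := r / (2 * g).
have g2_gt0 : 0 < 2 * g by lra.
have a_gt0 : 0 < a by rewrite divr_gt0.
have ga : g * a = r / 2 by rewrite /a; field; lra.
have a_le_r : a <= r by rewrite ler_pdivrMr // ler_peMr; lra.
have a_le1 : a <= 1 := le_trans a_le_r r_le1.
have an_le_a : a ^+ n.+1 <= a.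
  by rewrite exprS; apply: ler_piMr; [exact: ltW | exact: exprn_ile1 (ltW a_gt0) a_le1].
have an_le_rn : a ^+ n.+1 <= r ^+ n.+1.
  by apply: lerXn2r; rewrite ?nnegrE ?(ltW a_gt0) ?(ltW r_gt0).
rewrite ltNge; apply/negP => y_le.
have y2_le : y ^+ 2 <= a ^+ n.+1 * a.
  rewrite expr2; apply: ler_pM => //; exact: le_trans y_le an_le_a.
have : g * y ^+ 2 <= a ^+ n.+1 * (r / 2).
  by rewrite -ga [X in _ <= X]mulrCA; apply: ler_wpM2l y2_le; lra.
have r2_ge0 : 0 <= r / 2 by rewrite divr_ge0 // ltW.
have := ler_wpM2r r2_ge0 an_le_rn.
have := exprn_gt0 n.+1 r_gt0; have : r / 2 <= 1 / 2 by lra.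
nra.
Qed.

Lemma min1_exprn_le (R : realDomainType) (c : R) n : 0 < c -> Num.min c 1 ^+ n <= c ^+ n.
Proof.
move=> c_gt0; have c_ge0 := ltW c_gt0.
by apply: lerXn2r; rewrite ?nnegrE ?le_min ?ler01 ?c_ge0 // ge_min lexx.
Qed.

Section Trigonometry.
Variable R : realType.
Implicit Types x y : R.

Lemma sin_mean_value x : 0 < x -> exists2 c, 0 < c < x & sin x = x * cos c.
Proof.
move=> x_gt0.
have sin_cont (A : set R) : {within A, continuous (@sin R)}.
  by apply: continuous_subspaceT => y; exact: continuous_sin.
have [c c_in] := MVT x_gt0 (fun y _ => is_derive_sin y) (sin_cont _).
rewrite sin0 !subr0 mulrC => sin_x.
by exists c; rewrite // in_itv /= in c_in.
Qed.

Lemma abs_sin_le x : `|sin x| <= `|x|.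
Proof.
wlog x_ge0 : x / 0 <= x.
  move=> H; case: (lerP 0 x) => [/H//|/ltW x_le0].
  by rewrite -normrN -sinN -(normrN x) H // oppr_ge0.
case: (eqVneq x 0) => [->|x_neq0]; first by rewrite sin0 normr0.
have [c _ ->] : exists2 c, 0 < c < x & sin x = x * cos c.
  by apply: sin_mean_value; rewrite lt_neqAle eq_sym x_neq0.
by rewrite normrM ler_piMr ?cos_max.
Qed.

Lemma sqr_cos_pi4 : cos (pi / 4) ^+ 2 = 1 / 2 :> R.
Proof.
have := cos_mulr2n (pi / 4 : R).
have -> : (pi / 4 : R) *+ 2 = pi / 2 by rewrite mulr2n; field.
by rewrite cos_pihalf mulr2n; lra.
Qed.

Lemma cos_pi4_gt0 : 0 < cos (pi / 4 : R).
Proof. by apply: cos_gt0_pihalf; have := @pi_gt0 R; lra. Qed.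

Lemma sin_pi4 : sin (pi / 4) = cos (pi / 4 : R).
Proof. by rewrite -cosBpihalf -cosN; congr cos; lra. Qed.

Lemma cos_ge_cos_pi4 x : 0 <= x <= pi / 4 -> cos (pi / 4) <= cos x.
Proof.
move=> /andP[x_ge0 x_le]; have pi_gt0 := @pi_gt0 R.
case: (eqVneq x (pi / 4)) => [->//|x_neq].
rewrite ltW // ltr_cos ?lt_neqAle ?x_neq ?x_le // in_itv /=; apply/andP; lra.
Qed.

Lemma le_2sin x : 0 <= x <= pi / 2 -> x <= 2 * sin x.
Proof.
move=> /andP[x_ge0 x_le]; have pi_gt0 := @pi_gt0 R.
case: (eqVneq x 0) => [->|x_neq0]; first by rewrite sin0 mulr0.
have [c /andP[c_gt0 c_lt] sin_half] : exists2 c, 0 < c < x / 2 &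
    sin (x / 2) = x / 2 * cos c.
  by apply: sin_mean_value; rewrite divr_gt0 // lt_neqAle eq_sym x_neq0.
have cos_c : cos (pi / 4) <= cos c by apply: cos_ge_cos_pi4; apply/andP; lra.
have cos_x : cos (pi / 4) <= cos (x / 2) by apply: cos_ge_cos_pi4; apply/andP; lra.
have cos_prod : 1 / 2 <= cos (x / 2) * cos c.
  by rewrite -sqr_cos_pi4 expr2; apply: ler_pM => //; exact/ltW/cos_pi4_gt0.
have -> : sin x = 2 * sin (x / 2) * cos (x / 2).
  by rewrite {1}(splitr x) sinD; ring.
rewrite sin_half.
have w_ge0 : 0 <= x / 2 by lra.
have := ler_wpM2l w_ge0 cos_prod; lra.
Qed.

Lemma le_2abs_sin x : `|x| <= pi / 2 -> `|x| <= 2 * `|sin x|.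
Proof.
wlog x_ge0 : x / 0 <= x.
  move=> H; case: (lerP 0 x) => [/H//|/ltW x_le0].
  by rewrite -[`|sin x|]normrN -sinN -(normrN x); apply: H; rewrite oppr_ge0.
move=> x_le; have pi_gt0 := @pi_gt0 R.
rewrite ger0_norm // in x_le *.
rewrite ger0_norm ?le_2sin ?sin_ge0_pi //; apply/andP; lra.
Qed.

Lemma abs_sin_subzpi x (k : int) : `|sin (x - k%:~R * pi)| = `|sin x|.
Proof.
have abs_sin_Dpin y n : `|sin (y + pi *+ n)| = `|sin y|.
  by rewrite (alternatingn (@sinDpi R)) normrM normrX normrN1 expr1n mul1r.
case: k => n; rewrite ?NegzE ?mulrNz ?mulNr ?opprK -pmulrn mulr_natl.
  by rewrite -[in RHS](subrK (pi *+ n) x) abs_sin_Dpin.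
exact: abs_sin_Dpin.
Qed.

End Trigonometry.

Section ProjectiveDistance.
Variable R : realType.
Implicit Types x y : R.

Lemma abs_sin_le_dP x y : `|sin (x - y)| <= dP x y.
Proof.
apply: lb_le_inf; first by exists `|x - y - 0%:~R * pi|, 0.
by move=> _ [k _ <-]; rewrite -(abs_sin_subzpi (x - y) k) abs_sin_le.
Qed.

Lemma dP_ge0 x y : 0 <= dP x y.
Proof. exact: le_trans (normr_ge0 _) (abs_sin_le_dP x y). Qed.

(* For the integer [k] nearest to [(x - y) / pi], [|x - y - k pi| <= pi / 2],
   where Jordan's inequality [le_2abs_sin] applies. *)
Lemma dP_le_2abs_sin x y : dP x y <= 2 * `|sin (x - y)|.
Proof.
have pi_gt0 := @pi_gt0 R.
pose k := Num.floor ((x - y) / pi + 1 / 2).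
have /andP[k_le k_gt] := floor_itv ((x - y) / pi + 1 / 2).
apply: (@le_trans _ _ `|x - y - k%:~R * pi|).
  by apply: ge_inf; [exists 0 => _ [? _ <-] | exists k].
rewrite -(abs_sin_subzpi (x - y) k) le_2abs_sin //.
have -> : x - y - k%:~R * pi = ((x - y) / pi - k%:~R) * pi.
  by rewrite mulrBl divfK ?gt_eqF.
rewrite normrM (gtr0_norm pi_gt0).
have : `|(x - y) / pi - k%:~R| <= 1 / 2.
  by rewrite ler_norml; apply/andP; rewrite intrD in k_gt; split; lra.
by move=> h; have := ler_wpM2r (ltW pi_gt0) h; lra.
Qed.

Lemma dP_le2 x y : dP x y <= 2.
Proof. by apply: le_trans (dP_le_2abs_sin x y) _; have := sin_max (x - y); lra. Qed.

End ProjectiveDistance.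

Local Notation i0 := (@ord0 1).
Local Notation i1 := (@ord_max 1).
Local Notation j0 := (@ord0 0).

Section PlaneAlgebra.
Variable R : realFieldType.
Implicit Types (a b c d : R) (u v : 'cV[R]_2) (M N : 'M[R]_2).

Lemma cauchy_schwarz2 a b c d : (a * c + b * d) ^+ 2 <= (a ^+ 2 + b ^+ 2) * (c ^+ 2 + d ^+ 2).
Proof. by have := sqr_ge0 (a * d - b * c); nra. Qed.

Lemma sum_ord2 (F : 'I_2 -> R) : \sum_(k < 2) F k = F i0 + F i1.
Proof. by rewrite big_ord_recl big_ord1; congr (_ + F _); apply: val_inj. Qed.

Lemma mulmx2E p M (N : 'M[R]_(2, p)) i j :
  (M *m N) i j = M i i0 * N i0 j + M i i1 * N i1 j.
Proof. by rewrite !mxE sum_ord2. Qed.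

Lemma det_mx2 M : \det M = M i0 i0 * M i1 i1 - M i0 i1 * M i1 i0.
Proof.
rewrite (expand_det_row _ i0) sum_ord2 /cofactor !det_mx11 !mxE /=.
have -> : lift i0 0 = i1 by apply: val_inj.
have -> : lift i1 0 = i0 by apply: val_inj.
by rewrite expr0 expr1; ring.
Qed.

Definition sqn v := v i0 j0 ^+ 2 + v i1 j0 ^+ 2.

Definition cross u v := u i0 j0 * v i1 j0 - u i1 j0 * v i0 j0.

Definition frob2 M := sqn (col i0 M) + sqn (col i1 M).

Lemma frob2E M : frob2 M = M i0 i0 ^+ 2 + M i1 i0 ^+ 2 + M i0 i1 ^+ 2 + M i1 i1 ^+ 2.
Proof. by rewrite /frob2 /sqn !mxE addrA. Qed.

Lemma sqn_ge0 v : 0 <= sqn v.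
Proof. by rewrite addr_ge0 ?sqr_ge0. Qed.

Lemma frob2_ge0 M : 0 <= frob2 M.
Proof. by rewrite addr_ge0 ?sqn_ge0. Qed.

Lemma sqnZ a v : sqn (a *: v) = a ^+ 2 * sqn v.
Proof. by rewrite /sqn !mxE; ring. Qed.

Lemma crossZ a b u v : cross (a *: u) (b *: v) = a * b * cross u v.
Proof. by rewrite /cross !mxE; ring. Qed.

Lemma sqr_cross_le u v : cross u v ^+ 2 <= sqn u * sqn v.
Proof.
have := cauchy_schwarz2 (u i0 j0) (- u i1 j0) (v i1 j0) (v i0 j0).
by rewrite /cross /sqn sqrrN mulNr [_ ^+ 2 + v _ _ ^+ 2]addrC.
Qed.

Lemma cross_mulmx M u v : cross (M *m u) (M *m v) = \det M * cross u v.
Proof. by rewrite /cross det_mx2 !mulmx2E; ring. Qed.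

Lemma col_mulmx p M (N : 'M[R]_(2, p)) j : col j (M *m N) = M *m col j N.
Proof. by apply/matrixP => i k; rewrite !mxE; apply: eq_bigr => l _; rewrite !mxE. Qed.

Lemma sqn_mulmx_le M v : sqn (M *m v) <= frob2 M * sqn v.
Proof.
rewrite frob2E /sqn !mulmx2E.
have := cauchy_schwarz2 (M i0 i0) (M i0 i1) (v i0 j0) (v i1 j0).
have := cauchy_schwarz2 (M i1 i0) (M i1 i1) (v i0 j0) (v i1 j0).
lra.
Qed.

Lemma frob2_mulmx_le M N : frob2 (M *m N) <= frob2 M * frob2 N.
Proof.
rewrite [frob2 N]/frob2 [frob2 (_ *m _)]/frob2 !col_mulmx mulrDr.
by apply: lerD; apply: sqn_mulmx_le.
Qed.

(* [det M * v = adj M * (M v)], bounded row by row by Cauchy-Schwarz. *)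
Lemma sqr_det_sqn_le M v : \det M ^+ 2 * sqn v <= frob2 M * sqn (M *m v).
Proof.
set w := M *m v.
have e0 : \det M * v i0 j0 = M i1 i1 * w i0 j0 + (- M i0 i1) * w i1 j0.
  by rewrite /w det_mx2 !mulmx2E; ring.
have e1 : \det M * v i1 j0 = (- M i1 i0) * w i0 j0 + M i0 i0 * w i1 j0.
  by rewrite /w det_mx2 !mulmx2E; ring.
have := cauchy_schwarz2 (M i1 i1) (- M i0 i1) (w i0 j0) (w i1 j0).
have := cauchy_schwarz2 (- M i1 i0) (M i0 i0) (w i0 j0) (w i1 j0).
rewrite -e0 -e1 frob2E /sqn !sqrrN !exprMn; lra.
Qed.

Lemma sqr_det_frob2_le M N : \det M ^+ 2 * frob2 N <= frob2 M * frob2 (M *m N).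
Proof.
rewrite [frob2 N]/frob2 [frob2 (_ *m _)]/frob2 !col_mulmx mulrDr.
rewrite [X in _ <= X]mulrDr.
by apply: lerD; apply: sqr_det_sqn_le.
Qed.

(* [det M] is the cross product of the images of [v] and of its rotation by a right angle. *)
Lemma sqr_det_le M v : sqn v = 1 -> \det M ^+ 2 <= sqn (M *m v) * frob2 M.
Proof.
move=> v_unit; set w : 'cV[R]_2 := \col_i (if i == i0 then - v i1 j0 else v i0 j0).
have cross_vw : cross v w = 1 by rewrite -v_unit /cross /sqn !mxE /=; ring.
have sqn_w : sqn w = 1 by rewrite -v_unit /sqn !mxE /= sqrrN addrC.
have := sqr_cross_le (M *m v) (M *m w).
rewrite cross_mulmx cross_vw mulr1 => /le_trans; apply.
apply: ler_wpM2l; first exact: sqn_ge0.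
by have := sqn_mulmx_le M w; rewrite sqn_w mulr1.
Qed.

Lemma frob2N M : frob2 (- M) = frob2 M.
Proof. by rewrite !frob2E !mxE !sqrrN. Qed.

Lemma frob2D_le M N : frob2 (M + N) <= 2 * frob2 M + 2 * frob2 N.
Proof.
have sqrD_le a b : (a + b) ^+ 2 <= 2 * a ^+ 2 + 2 * b ^+ 2.
  by have := sqr_ge0 (a - b); nra.
rewrite !frob2E !mxE.
have := sqrD_le (M i0 i0) (N i0 i0); have := sqrD_le (M i1 i0) (N i1 i0).
have := sqrD_le (M i0 i1) (N i0 i1); have := sqrD_le (M i1 i1) (N i1 i1).
lra.
Qed.

Lemma frob2_sqr_sub_le M N F : frob2 M <= F -> frob2 N <= F ->
  frob2 (M *m M - N *m N) <= 4 * F * frob2 (M + N).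
Proof.
move=> frobM frobN; have F_ge0 := le_trans (frob2_ge0 M) frobM.
have -> : M *m M - N *m N = M *m (M + N) - (M + N) *m N.
  by rewrite mulmxDr mulmxDl opprD addrA addrK.
apply: le_trans (frob2D_le _ _) _; rewrite frob2N.
have := le_trans (frob2_mulmx_le M (M + N)) (ler_wpM2r (frob2_ge0 _) frobM).
have := le_trans (frob2_mulmx_le (M + N) N) (ler_wpM2l (frob2_ge0 _) frobN).
lra.
Qed.

End PlaneAlgebra.

Section Directions.
Variable R : realType.
Implicit Types (a b t : R) (v p q : 'cV[R]_2) (M : 'M[R]_2).

Definition dir t := vec2 (cos t) (sin t).

Lemma sqn_dir t : sqn (dir t) = 1.
Proof. by rewrite /sqn !mxE /= cos2Dsin2. Qed.

Lemma cross_dir a b : cross (dir a) (dir b) = sin (b - a).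
Proof. by rewrite /cross !mxE /= sinB; ring. Qed.

Lemma dir_surj v : sqn v = 1 -> exists t, dir t = v.
Proof.
move=> v_unit; set x := v i0 j0; set y := v i1 j0.
have x_in : x \in `[-1, 1].
  by rewrite in_itv /=; apply/andP; split; rewrite /sqn -/x -/y in v_unit; nra.
have sin_acos : sin (acos x) = `|y|.
  rewrite sin_acos ?(itvP x_in) // -sqrtr_sqr; congr Num.sqrt.
  by rewrite -v_unit /sqn -/x -/y; ring.
suff [t [cos_t sin_t]] : exists t, cos t = x /\ sin t = y.
  by exists t; apply/matrixP => i j; rewrite !ord1 !mxE; case: i => [[|[|//]] ?] /=;
    [rewrite cos_t /x | rewrite sin_t /y]; congr (v _ _); apply: val_inj.
case: (lerP 0 y) => y_sign.
- by exists (acos x); rewrite acosK // sin_acos ger0_norm.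
- by exists (- acos x); rewrite cosN sinN acosK // sin_acos ltr0_norm // opprK.
Qed.

Lemma sqr_sin_cross a b l1 l2 p q : dir a = l1 *: p -> dir b = l2 *: q ->
  sin (b - a) ^+ 2 * (sqn p * sqn q) = cross p q ^+ 2.
Proof.
move=> dir_a dir_b.
have sqn_p : l1 ^+ 2 * sqn p = 1 by rewrite -sqnZ -dir_a sqn_dir.
have sqn_q : l2 ^+ 2 * sqn q = 1 by rewrite -sqnZ -dir_b sqn_dir.
rewrite -cross_dir dir_a dir_b crossZ.
transitivity (cross p q ^+ 2 * (l1 ^+ 2 * sqn p) * (l2 ^+ 2 * sqn q)); first by ring.
by rewrite sqn_p sqn_q !mulr1.
Qed.

Lemma sqr_sin_sqn_le a b l1 l2 p q : dir a = l1 *: p -> dir b = l2 *: q ->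
  sin (b - a) ^+ 2 * sqn q <= sqn (p - q).
Proof.
move=> dir_a dir_b.
have sqn_p_gt0 : 0 < sqn p.
  rewrite lt_neqAle sqn_ge0 andbT; apply: contra_eqN (sqn_dir a).
  by rewrite dir_a sqnZ => /eqP <-; rewrite mulr0 eq_sym oner_neq0.
rewrite -(ler_pM2l sqn_p_gt0) mulrCA (sqr_sin_cross dir_a dir_b).
have -> : cross p q ^+ 2 = cross p (p - q) ^+ 2 by rewrite /cross !mxE; ring.
exact: sqr_cross_le.
Qed.

Lemma vnormE v : vnorm v = Num.sqrt (sqn v).
Proof. by []. Qed.

Lemma sqn_mulmx_dir0 M : sqn (M *m dir 0) = sqn (col i0 M).
Proof. by rewrite /sqn !mulmx2E !mxE /= cos0 sin0; congr (_ + _); ring. Qed.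

Lemma sqn_mulmx_dir_pihalf M : sqn (M *m dir (pi / 2)) = sqn (col i1 M).
Proof. by rewrite /sqn !mulmx2E !mxE /= cos_pihalf sin_pihalf; congr (_ + _); ring. Qed.

Lemma sqn_mulmx_unit_le M v : vnorm v = 1 -> sqn (M *m v) <= frob2 M.
Proof.
move=> v_unit; have := sqn_mulmx_le M v.
by rewrite -[sqn v]sqr_sqrtr ?sqn_ge0 // -vnormE v_unit expr1n mulr1.
Qed.

Lemma opnorm_le_sqrt_frob2 M : opnorm M <= Num.sqrt (frob2 M).
Proof.
apply: ge_sup; first by exists (vnorm (M *m dir 0)), (dir 0); rewrite //= vnormE sqn_dir sqrtr1.
by move=> _ [v /= v_unit <-]; rewrite vnormE ler_wsqrtr // sqn_mulmx_unit_le.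
Qed.

Lemma sqrt_sqn_mulmx_le_opnorm M v : vnorm v = 1 -> Num.sqrt (sqn (M *m v)) <= opnorm M.
Proof.
move=> v_unit; apply: ub_le_sup; last by exists v.
exists (Num.sqrt (frob2 M)) => _ [w /= w_unit <-].
by rewrite vnormE ler_wsqrtr // sqn_mulmx_unit_le.
Qed.

Lemma opnorm_ge0 M : 0 <= opnorm M.
Proof.
apply: le_trans (sqrt_sqn_mulmx_le_opnorm M (v := dir 0) _); first exact: sqrtr_ge0.
by rewrite vnormE sqn_dir sqrtr1.
Qed.

Lemma sqr_opnorm_le_frob2 M : opnorm M ^+ 2 <= frob2 M.
Proof.
rewrite -ler_sqrt ?frob2_ge0 // sqrtr_sqr ger0_norm ?opnorm_ge0 //.
exact: opnorm_le_sqrt_frob2.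
Qed.

Lemma frob2_le_sqr_opnorm M : frob2 M <= 2 * opnorm M ^+ 2.
Proof.
have col_le (t : R) : vnorm (dir t) = 1 -> sqn (M *m dir t) <= opnorm M ^+ 2.
  move=> /(sqrt_sqn_mulmx_le_opnorm M) le_opnorm.
  by rewrite -ler_sqrt ?sqr_ge0 // sqrtr_sqr ger0_norm ?opnorm_ge0.
have unit_dir (t : R) : vnorm (dir t) = 1 by rewrite vnormE sqn_dir sqrtr1.
have := col_le _ (unit_dir 0); have := col_le _ (unit_dir (pi / 2)).
rewrite sqn_mulmx_dir0 sqn_mulmx_dir_pihalf /frob2; lra.
Qed.

End Directions.

Section InducedAction.
Variable R : realType.
Implicit Types (a b t : R) (P Q M : 'M[R]_2).

Lemma phiA_dir M t : \det M != 0 ->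
  exists2 l, l != 0 & dir (phiA M t) = l *: (M *m dir t).
Proof.
move=> detM_neq0; set w := M *m dir t.
have sqn_w_gt0 : 0 < sqn w.
  rewrite lt_neqAle sqn_ge0 andbT eq_sym; apply: contra detM_neq0 => /eqP sqn_w0.
  have := sqr_det_le M (sqn_dir t); rewrite -/w sqn_w0 mul0r => det_le.
  by rewrite -sqrf_eq0 eq_le det_le sqr_ge0.
set r := Num.sqrt (sqn w).
have r_gt0 : 0 < r by rewrite sqrtr_gt0.
have [t' dir_t'] : exists t', dir t' = r^-1 *: w.
  apply: dir_surj; rewrite sqnZ exprVn sqr_sqrtr ?sqn_ge0 // mulVf //.
  by rewrite gt_eqF.
have [] := @xgetPex _ 0 [set t' | exists l : R, l != 0 /\ dir t' = l *: w].
  by exists t', r^-1; rewrite invr_eq0 gt_eqF.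
by move=> l [l_neq0 dir_phi]; exists l.
Qed.

Lemma sqr_dP_det_le P Q t a b l1 l2 :
  dir a = l1 *: (P *m dir t) -> dir b = l2 *: (Q *m dir t) ->
  dP a b ^+ 2 * \det Q ^+ 2 <= 4 * frob2 (P - Q) * frob2 Q.
Proof.
move=> dir_a dir_b.
have unit_t : vnorm (dir t) = 1 by rewrite vnormE sqn_dir sqrtr1.
have sin_le : sin (b - a) ^+ 2 * sqn (Q *m dir t) <= frob2 (P - Q).
  apply: le_trans (sqr_sin_sqn_le dir_a dir_b) _.
  by rewrite -mulmxBl sqn_mulmx_unit_le.
have det_le := sqr_det_le Q (sqn_dir t).
have dP_le : dP a b ^+ 2 <= 4 * sin (b - a) ^+ 2.
  have := dP_le_2abs_sin a b; rewrite -opprB sinN normrN => le2.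
  have -> : 4 * sin (b - a) ^+ 2 = (2 * `|sin (b - a)|) ^+ 2.
    by rewrite exprMn real_normK ?num_real //; ring.
  by apply: lerXn2r; rewrite ?nnegrE ?dP_ge0.
apply: le_trans (ler_pM (sqr_ge0 _) (sqr_ge0 _) dP_le det_le) _.
rewrite mulrA -[4 * sin _ ^+ 2 * _]mulrA.
by apply: ler_wpM2r; [exact: frob2_ge0 | exact: ler_wpM2l].
Qed.

Lemma sqr_cross_le_dP P Q t a b l1 l2 B :
  dir a = l1 *: (P *m dir t) -> dir b = l2 *: (Q *m dir t) -> dP a b <= B ->
  cross (P *m dir t) (Q *m dir t) ^+ 2 <= B ^+ 2 * (frob2 P * frob2 Q).
Proof.
move=> dir_a dir_b dP_le.
have unit_t : vnorm (dir t) = 1 by rewrite vnormE sqn_dir sqrtr1.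
rewrite -(sqr_sin_cross dir_a dir_b).
apply: ler_pM; rewrite ?sqr_ge0 ?mulr_ge0 ?sqn_ge0 //.
  rewrite -[sin _ ^+ 2]real_normK ?num_real //; apply: lerXn2r; rewrite ?nnegrE //.
    exact: le_trans (dP_ge0 a b) dP_le.
  by rewrite -opprB sinN normrN; exact: le_trans (abs_sin_le_dP a b) dP_le.
by apply: ler_pM; rewrite ?sqn_ge0 ?sqn_mulmx_unit_le.
Qed.

End InducedAction.

Section SL2Algebra.
Variable R : realFieldType.
Implicit Types (N : 'M[R]_2) (F e : R).

Lemma frob2_sub1_le N F e : \det N = 1 -> 0 <= N i0 i0 -> frob2 N <= F -> 1 <= F ->
  N i1 i0 ^+ 2 <= e -> N i0 i1 ^+ 2 <= e -> (N i1 i1 - N i0 i0) ^+ 2 <= e ->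
  frob2 (1 - N) <= 16 * F * e.
Proof.
rewrite det_mx2 frob2E => detN a_ge0 frobN F_ge1 b_le c_le d_le.
set a := N i0 i0 in detN a_ge0 frobN d_le *; set d := N i1 i1 - a in d_le.
have e_ge0 : 0 <= e := le_trans (sqr_ge0 _) b_le.
have a2_le : a ^+ 2 <= F by move: frobN; have := sqr_ge0 (N i1 i1); nra.
have c2_le : N i0 i1 ^+ 2 <= F by move: frobN; have := sqr_ge0 (N i1 i0); nra.
have sqr_a2_sub1 : (a ^+ 2 - 1) ^+ 2 <= 4 * F * e.
  have -> : a ^+ 2 - 1 = N i0 i1 * N i1 i0 - a * d by rewrite -detN /d; ring.
  have x2_le : (N i0 i1 * N i1 i0) ^+ 2 <= F * e.
    by rewrite exprMn; apply: ler_pM; rewrite ?sqr_ge0.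
  have y2_le : (a * d) ^+ 2 <= F * e.
    by rewrite exprMn; apply: ler_pM; rewrite ?sqr_ge0.
  have := sqr_ge0 (N i0 i1 * N i1 i0 + a * d); nra.
have sqr_a_sub1 : (a - 1) ^+ 2 <= 4 * F * e.
  apply: le_trans sqr_a2_sub1; have -> : a ^+ 2 - 1 = (a - 1) * (a + 1) by ring.
  by rewrite exprMn ler_peMr ?sqr_ge0 // -(expr1n _ 2) lerXn2r ?nnegrE; lra.
rewrite frob2E !mxE /= -/a.
have -> : 1 - N i1 i1 = (1 - a) - d by rewrite /d; ring.
have e_le : e <= F * e by rewrite ler_peMl.
have := sqr_ge0 (1 - a + d); nra.
Qed.

Lemma frob2_sub1_or_add1_le N F e : \det N = 1 -> frob2 N <= F -> 1 <= F ->
  N i1 i0 ^+ 2 <= e -> N i0 i1 ^+ 2 <= e -> (N i1 i1 - N i0 i0) ^+ 2 <= e ->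
  frob2 (1 - N) <= 16 * F * e \/ frob2 (1 + N) <= 16 * F * e.
Proof.
move=> detN frobN F_ge1 b_le c_le d_le.
have [a_ge0|a_lt0] := lerP 0 (N i0 i0); first by left; exact: frob2_sub1_le.
right; rewrite -[N]opprK -[1 + - - N]/(1 - - N).
apply: frob2_sub1_le; rewrite ?frob2N ?mxE ?sqrrN //.
- by rewrite det_mx2 !mxE -detN det_mx2; ring.
- by rewrite oppr_ge0 ltW.
- by rewrite -opprD sqrrN.
Qed.

End SL2Algebra.

Section SL2Directions.
Variable R : realType.
Implicit Types (P Q N : 'M[R]_2) (M e t : R).

Lemma cross_dir_mulmx N t : cross (dir t) (N *m dir t) =
  N i1 i0 * cos t ^+ 2 + (N i1 i1 - N i0 i0) * (cos t * sin t) - N i0 i1 * sin t ^+ 2.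
Proof. by rewrite /cross !mulmx2E !mxE /=; ring. Qed.

Lemma frob2_sub_or_add_le P Q M e : \det P = 1 -> \det Q = 1 ->
  frob2 P <= M -> frob2 Q <= M -> 1 <= M ->
  cross (P *m dir 0) (Q *m dir 0) ^+ 2 <= e ->
  cross (P *m dir (pi / 2)) (Q *m dir (pi / 2)) ^+ 2 <= e ->
  cross (P *m dir (pi / 4)) (Q *m dir (pi / 4)) ^+ 2 <= e ->
  frob2 (P - Q) <= 288 * M ^+ 3 * e \/ frob2 (P + Q) <= 288 * M ^+ 3 * e.
Proof.
move=> detP detQ frobP frobQ M_ge1 cross0 cross1 cross2.
(* The three cross products are values of the quadratic form [v x N v] of
   [N := P^-1 Q]; they control its off-diagonal entries and [N11 - N00]. *)
have P_unit : P \in unitmx by rewrite unitmxE detP unitr1.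
set N := invmx P *m Q.
have QE : Q = P *m N by rewrite mulKVmx.
have crossN t : cross (P *m dir t) (Q *m dir t) = cross (dir t) (N *m dir t).
  by rewrite QE -mulmxA cross_mulmx detP mul1r.
rewrite !crossN !cross_dir_mulmx in cross0 cross1 cross2.
have b_le : N i1 i0 ^+ 2 <= e.
  by move: cross0; rewrite cos0 sin0; congr (_ <= _); ring.
have c_le : N i0 i1 ^+ 2 <= e.
  by move: cross1; rewrite cos_pihalf sin_pihalf; congr (_ <= _); ring.
have d_le : (N i1 i1 - N i0 i0) ^+ 2 <= 18 * e.
  move: cross2; rewrite sin_pi4 -expr2 sqr_cos_pi4.
  set x := _ - _ * (1 / 2) => x_le.
  have -> : N i1 i1 - N i0 i0 = 2 * x - N i1 i0 + N i0 i1 by rewrite /x; field.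
  have := sqr_ge0 (2 * x + N i1 i0); have := sqr_ge0 (2 * x - N i0 i1).
  have := sqr_ge0 (N i1 i0 + N i0 i1); nra.
have detN : \det N = 1 by have := congr1 determinant QE; rewrite detM detP detQ mul1r.
have frobN : frob2 N <= M ^+ 2.
  have := sqr_det_frob2_le P N; rewrite -QE detP expr1n mul1r => /le_trans; apply.
  by rewrite expr2; apply: ler_pM; rewrite ?frob2_ge0.
have M2_ge1 : 1 <= M ^+ 2 by rewrite -(expr1n _ 2) lerXn2r ?nnegrE //; lra.
have frob2_mulP X : frob2 X <= 16 * M ^+ 2 * (18 * e) -> frob2 (P *m X) <= 288 * M ^+ 3 * e.
  move=> X_le; apply: le_trans (frob2_mulmx_le P X) _.
  have -> : 288 * M ^+ 3 * e = M * (16 * M ^+ 2 * (18 * e)) by ring.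
  by apply: ler_pM; rewrite ?frob2_ge0.
have e_le : e <= 18 * e by have := le_trans (sqr_ge0 _) b_le; lra.
have [sub1|add1] := frob2_sub1_or_add1_le detN frobN M2_ge1
  (le_trans b_le e_le) (le_trans c_le e_le) d_le.
- by left; rewrite QE -{1}[P]mulmx1 -mulmxBr frob2_mulP.
- by right; rewrite QE -{1}[P]mulmx1 -mulmxDr frob2_mulP.
Qed.

End SL2Directions.

Section Words.
Variables (R : realType) (L : finType) (A : L -> 'M[R]_2).
Implicit Types (s : seq L) (K d t : R).

(* On a tuple [w], [Aseq w] and [phiseq w] are convertible to [Aw A w] and [phiw A w]. *)
Definition Aseq s : 'M[R]_2 := \prod_(k <- s) A k.

Definition phiseq s : R -> R := foldr (fun k f => phiA (A k) \o f) id s.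

Lemma Aseq_cons k s : Aseq (k :: s) = A k * Aseq s.
Proof. by rewrite /Aseq big_cons. Qed.

Lemma Aseq_cat s1 s2 : Aseq (s1 ++ s2) = Aseq s1 * Aseq s2.
Proof. by rewrite /Aseq big_cat. Qed.

Lemma phiseq_dir s t : (forall i, \det (A i) != 0) ->
  exists2 l, l != 0 & dir (phiseq s t) = l *: (Aseq s *m dir t).
Proof.
move=> detA_neq0; elim: s => [|k s [l l_neq0 dir_s]].
  by exists 1; rewrite ?oner_neq0 // /Aseq big_nil mul1mx scale1r.
have [l' l'_neq0 dir_k] := phiA_dir (phiseq s t) (detA_neq0 k).
exists (l' * l); first by rewrite mulf_neq0.
by rewrite /= dir_k dir_s Aseq_cons -mulmxE -scalemxAr scalerA mulmxA.
Qed.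

Lemma frob2_Aseq_le K s : 0 <= K -> (forall i, frob2 (A i) <= K) ->
  frob2 (Aseq s) <= 2 * K ^+ size s.
Proof.
move=> K_ge0 frobA_le; elim: s => [|k s IHs].
  by rewrite /Aseq big_nil frob2E !mxE /= expr0; lra.
rewrite Aseq_cons -mulmxE exprS mulrCA.
apply: le_trans (frob2_mulmx_le _ _) _.
by apply: ler_pM; rewrite ?frob2_ge0.
Qed.

Lemma det_Aseq_ge d s : 0 <= d -> (forall i, d <= `|\det (A i)|) ->
  d ^+ size s <= `|\det (Aseq s)|.
Proof.
move=> d_ge0 detA_ge; elim: s => [|k s IHs]; first by rewrite /Aseq big_nil det1 normr1.
by rewrite Aseq_cons detM normrM exprS; apply: ler_pM; rewrite ?exprn_ge0.
Qed.

Lemma det_Aseq_eq1 s : (forall i, \det (A i) = 1) -> \det (Aseq s) = 1.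
Proof.
move=> detA1; elim: s => [|k s IHs]; first by rewrite /Aseq big_nil det1.
by rewrite Aseq_cons detM IHs detA1 mulr1.
Qed.

End Words.

Section SeparationImpliesDiophantine.
Variables (R : realType) (L : finType) (A : L -> 'M[R]_2) (c K d : R).
Hypothesis detA_neq0 : forall i, \det (A i) != 0.
Hypotheses (c_gt0 : 0 < c) (c_le1 : c <= 1).
Hypotheses (K_ge1 : 1 <= K) (frobA_le : forall i, frob2 (A i) <= K).
Hypotheses (d_gt0 : 0 < d) (d_le1 : d <= 1) (detA_ge : forall i, d <= `|\det (A i)|).
Hypothesis separation : forall h1 h2 (t1 t2 : seq L), size t1 = size t2 -> h1 != h2 ->
  exists x, c ^+ (size t1).+1 < dP (phiseq A (h1 :: t1) x) (phiseq A (h2 :: t2) x).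

Let rho := c ^+ 2 * d ^+ 2 / K.

Let K_gt0 : 0 < K. Proof. by apply: lt_le_trans K_ge1. Qed.

Let rhoK : rho * K = c ^+ 2 * d ^+ 2.
Proof. by rewrite /rho divfK // gt_eqF. Qed.

Let rho_gt0 : 0 < rho.
Proof. by rewrite /rho divr_gt0 // mulr_gt0 // exprn_gt0. Qed.

Let rho_le1 : rho <= 1.
Proof.
rewrite /rho ler_pdivrMr // mul1r; apply: le_trans K_ge1.
by apply: mulr_ile1; rewrite ?sqr_ge0 // exprn_ile1 // ltW.
Qed.

Lemma frob2_Aseq_sub_gt_head h1 h2 t1 t2 : size t1 = size t2 -> h1 != h2 ->
  rho ^+ (size t1).+1 < 8 * frob2 (Aseq A (h1 :: t1) - Aseq A (h2 :: t2)).
Proof.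
move=> eq_size neq_head; set m := (size t1).+1.
have [x dP_gt] := separation eq_size neq_head.
set P := Aseq A (h1 :: t1); set Q := Aseq A (h2 :: t2).
have [l1 _ dir1] := phiseq_dir (h1 :: t1) x detA_neq0.
have [l2 _ dir2] := phiseq_dir (h2 :: t2) x detA_neq0.
have dP_det_le := sqr_dP_det_le dir1 dir2; rewrite -/P -/Q in dP_det_le.
have frobQ : frob2 Q <= 2 * K ^+ m.
  by have := frob2_Aseq_le (h2 :: t2) (ltW K_gt0) frobA_le; rewrite /= -eq_size.
have detQ : d ^+ m <= `|\det Q|.
  by have := det_Aseq_ge (h2 :: t2) (ltW d_gt0) detA_ge; rewrite /= -eq_size.
set D := dP _ _ in dP_gt dP_det_le.
have cd_lt : (c ^+ m * d ^+ m) ^+ 2 < D ^+ 2 * \det Q ^+ 2.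
  rewrite -[\det Q ^+ 2]real_normK ?num_real // -[D ^+ 2 * _]exprMn.
  rewrite ltrXn2r ?mulr_ge0 ?exprn_ge0 ?ltW //.
  apply: (@lt_le_trans _ _ (D * d ^+ m)); first by rewrite ltr_pM2r ?exprn_gt0.
  by apply: ler_wpM2l; rewrite ?dP_ge0.
have rhoK_lt : (rho * K) ^+ m < 8 * K ^+ m * frob2 (P - Q).
  rewrite rhoK exprMn -!exprM mulnC !exprM -exprMn.
  apply: lt_le_trans cd_lt (le_trans dP_det_le _).
  have -> : 8 * K ^+ m * frob2 (P - Q) = 4 * frob2 (P - Q) * (2 * K ^+ m) by ring.
  by apply: ler_wpM2l; rewrite ?mulr_ge0 ?frob2_ge0.
by move: rhoK_lt; rewrite exprMn (mulrC 8) -mulrA [rho ^+ m * _]mulrC ltr_pM2l ?exprn_gt0.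
Qed.

Lemma frob2_Aseq_sub_ge s1 s2 : size s1 = size s2 -> s1 != s2 ->
  rho ^+ size s1 <= 8 * frob2 (Aseq A s1 - Aseq A s2).
Proof.
elim: s1 s2 => [|h1 t1 IHt] [|h2 t2] //= [eq_size] neq.
have [eq_head|neq_head] := eqVneq h1 h2; last exact/ltW/frob2_Aseq_sub_gt_head.
rewrite -{}eq_head eqseq_cons eqxx /= in neq *.
have {}IHt := IHt _ eq_size neq.
rewrite !Aseq_cons -mulrBr -mulmxE.
set X := Aseq A t1 - Aseq A t2 in IHt *; set Ah := A h1.
have d2_le : d ^+ 2 <= \det Ah ^+ 2.
  rewrite -[\det Ah ^+ 2]real_normK ?num_real //.
  by apply: lerXn2r; rewrite ?nnegrE ?normr_ge0 ?(ltW d_gt0) ?detA_ge.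
rewrite -(ler_pM2l K_gt0); apply: (@le_trans _ _ (d ^+ 2 * (8 * frob2 X))).
  rewrite exprS mulrA (mulrC K) rhoK (mulrC (c ^+ 2)) -mulrA.
  apply: ler_wpM2l; first exact: sqr_ge0.
  apply: le_trans IHt; apply: ler_piMl; first exact: exprn_ge0 (ltW rho_gt0).
  exact: exprn_ile1 (ltW c_gt0) c_le1.
rewrite [d ^+ 2 * _]mulrCA [K * _]mulrCA ler_pM2l //.
apply: (@le_trans _ _ (\det Ah ^+ 2 * frob2 X)); first by rewrite ler_wpM2r ?frob2_ge0.
apply: le_trans (sqr_det_frob2_le Ah X) _.
by apply: ler_wpM2r; [exact: frob2_ge0 | exact: frobA_le].
Qed.

Lemma strongly_diophantine_of_separation : strongly_diophantine A.
Proof.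
exists (rho / (2 * 16)); split; first by apply: divr_gt0; [exact: rho_gt0 | lra].
move=> [|n] w1 w2 neq_w; first by rewrite (tuple0 w1) (tuple0 w2) eqxx in neq_w.
have eq_size : size w1 = size w2 by rewrite !size_tuple.
have := frob2_Aseq_sub_ge eq_size neq_w; rewrite size_tuple => rho_le.
apply: expn_lt_of_le_sqr; [exact: rho_gt0 | exact: rho_le1 | lra | exact: opnorm_ge0 |].
apply: le_trans rho_le _; have := frob2_le_sqr_opnorm (Aw A w1 - Aw A w2).
by rewrite /Aw -/(Aseq A w1) -/(Aseq A w2); lra.
Qed.

End SeparationImpliesDiophantine.

Section DiophantineImpliesSeparation.
Variables (R : realType) (L : finType) (A : L -> 'M[R]_2) (c K : R).
Hypothesis detA1 : forall i, \det (A i) = 1.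
Hypotheses (c_gt0 : 0 < c) (c_le1 : c <= 1).
Hypotheses (K_ge1 : 1 <= K) (frobA_le : forall i, frob2 (A i) <= K).
Hypothesis diophantine : forall s1 s2 : seq L, size s1 = size s2 -> s1 != s2 ->
  c ^+ size s1 < opnorm (Aseq A s1 - Aseq A s2).

Let detA_neq0 i : \det (A i) != 0.
Proof. by rewrite detA1 oner_neq0. Qed.

Let rho := c ^+ 4 / K ^+ 6.

Let rho_gt0 : 0 < rho.
Proof. by rewrite divr_gt0 ?exprn_gt0 // (lt_le_trans ltr01). Qed.

Let rho_le1 : rho <= 1.
Proof.
rewrite ler_pdivrMr ?exprn_gt0 ?(lt_le_trans ltr01) // mul1r.
by apply: le_trans (exprn_ege1 _ K_ge1); exact: exprn_ile1 (ltW c_gt0) c_le1.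
Qed.

Lemma frob2_Aseq_sub_gt s1 s2 : size s1 = size s2 -> s1 != s2 ->
  c ^+ size s1 ^+ 2 < frob2 (Aseq A s1 - Aseq A s2).
Proof.
move=> eq_size neq; apply: lt_le_trans (sqr_opnorm_le_frob2 _).
by rewrite ltrXn2r ?exprn_ge0 ?ltW ?diophantine.
Qed.

Lemma sqr_dP_ge s1 s2 B : size s1 = size s2 -> s1 != s2 ->
  dP (phiseq A s1 0) (phiseq A s2 0) <= B ->
  dP (phiseq A s1 (pi / 2)) (phiseq A s2 (pi / 2)) <= B ->
  dP (phiseq A s1 (pi / 4)) (phiseq A s2 (pi / 4)) <= B ->
  rho ^+ size s1 <= 1152 * 64 * B ^+ 2.
Proof.
move=> eq_size neq dP0 dP1 dP2; set n := size s1.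
set P := Aseq A s1; set Q := Aseq A s2; set M := 2 * K ^+ n.
have K_ge0 : 0 <= K by apply: le_trans K_ge1.
have frobP : frob2 P <= M by exact: frob2_Aseq_le.
have frobQ : frob2 Q <= M by rewrite /M /n eq_size; exact: frob2_Aseq_le.
have M_ge1 : 1 <= M by have := exprn_ege1 n K_ge1; rewrite /M; lra.
have cross_le t : dP (phiseq A s1 t) (phiseq A s2 t) <= B ->
    cross (P *m dir t) (Q *m dir t) ^+ 2 <= B ^+ 2 * M ^+ 2.
  move=> dP_le; have [l1 _ dir1] := phiseq_dir s1 t detA_neq0.
  have [l2 _ dir2] := phiseq_dir s2 t detA_neq0.
  apply: le_trans (sqr_cross_le_dP dir1 dir2 dP_le) _.
  by apply: ler_wpM2l; rewrite ?sqr_ge0 // expr2 ler_pM ?frob2_ge0.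
have := frob2_sub_or_add_le (det_Aseq_eq1 s1 detA1) (det_Aseq_eq1 s2 detA1)
  frobP frobQ M_ge1 (cross_le _ dP0) (cross_le _ dP1) (cross_le _ dP2).
set E := 288 * M ^+ 3 * (B ^+ 2 * M ^+ 2) => sub_or_add.
have cn_le : c ^+ n ^+ 4 <= 4 * M * E.
  case: sub_or_add => [sub_le|add_le].
    have cn4_le2 : c ^+ n ^+ 4 <= c ^+ n ^+ 2.
      rewrite (_ : 4 = 2 + 2)%N // exprD; apply: ler_piMl; first exact: sqr_ge0.
      by rewrite -exprM exprn_ile1 // ltW.
    have E_ge0 : 0 <= E := le_trans (frob2_ge0 _) sub_le.
    have := frob2_Aseq_sub_gt eq_size neq; rewrite -/n -/P -/Q.
    have M4_ge1 : 1 <= 4 * M by lra.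
    by have := ler_wpM2r E_ge0 M4_ge1; rewrite mul1r; lra.
  (* [Q] is close to [-P], so [P P] is close to [Q Q]. *)
  have eq_size2 : size (s1 ++ s1) = size (s2 ++ s2) by rewrite !size_cat eq_size.
  have neq2 : s1 ++ s1 != s2 ++ s2 by rewrite eqseq_cat // negb_and neq.
  have := frob2_Aseq_sub_gt eq_size2 neq2.
  rewrite !Aseq_cat -/P -/Q size_cat -/n -!mulmxE.
  have -> : c ^+ (n + n) ^+ 2 = c ^+ n ^+ 4 by rewrite exprD -expr2 -exprM.
  move=> /ltW /le_trans; apply; apply: le_trans (frob2_sqr_sub_le frobP frobQ) _.
  by apply: ler_wpM2l => //; lra.
rewrite (_ : 4 * M * E = 1152 * 64 * K ^+ n ^+ 6 * B ^+ 2) in cn_le; last by rewrite /E /M; ring.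
rewrite /rho expr_div_n exprAC [(K ^+ 6) ^+ n]exprAC.
by rewrite ler_pdivrMr ?exprn_gt0 ?(lt_le_trans ltr01) //; lra.
Qed.

Lemma strong_exp_sep_of_diophantine : strong_exp_sep A setT.
Proof.
split.
  move=> n w1 w2 same; apply/eqP; apply: contraT => neq.
  have eq_size : size w1 = size w2 by rewrite !size_tuple.
  have dP_le0 t : dP (phiseq A w1 t) (phiseq A w2 t) <= 0 by rewrite [dP _ _]same.
  have := sqr_dP_ge eq_size neq (dP_le0 _) (dP_le0 _) (dP_le0 _).
  by rewrite expr2 !mulr0 leNgt (exprn_gt0 _ rho_gt0).
exists (rho / (2 * (1152 * 64))); split; first by apply: divr_gt0; [exact: rho_gt0 | lra].
move=> n w1 w2 neq_head.
have neq : val w1 != val w2 by apply: contraNneq neq_head => /val_inj ->.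
have eq_size : size w1 = size w2 by rewrite !size_tuple.
set S := sup _.
have S_ge t : dP (phiseq A w1 t) (phiseq A w2 t) <= S.
  apply: ub_le_sup; last by exists t.
  by exists 2 => _ [x _ <-]; exact: dP_le2.
apply: expn_lt_of_le_sqr; [exact: rho_gt0 | exact: rho_le1 | lra | |].
  exact: le_trans (dP_ge0 _ _) (S_ge 0).
by have := sqr_dP_ge eq_size neq (S_ge 0) (S_ge _) (S_ge _); rewrite size_tuple.
Qed.

End DiophantineImpliesSeparation.

Section FiniteFamilies.
Variables (R : realType) (L : finType) (A : L -> 'M[R]_2).

Lemma frob2_ubound : exists2 K, 1 <= K & forall i, frob2 (A i) <= K.
Proof.
exists (\big[Num.max/1]_i frob2 (A i)); first exact: bigmax_ge_id.
by move=> i; exact: le_bigmax.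
Qed.

Lemma det_lbound : (forall i, \det (A i) != 0) ->
  exists d, [/\ 0 < d, d <= 1 & forall i, d <= `|\det (A i)|].
Proof.
move=> detA_neq0; exists (\big[Num.min/1]_i `|\det (A i)|); split.
- by apply/bigmin_gtP; split=> // i _; rewrite normr_gt0.
- exact: bigmin_le_id.
- by move=> i; exact: bigmin_le.
Qed.

Lemma strong_exp_sep_strongly_diophantine (J : set R) :
  (forall i, \det (A i) != 0) -> J !=set0 -> strong_exp_sep A J -> strongly_diophantine A.
Proof.
move=> detA_neq0 [x0 Jx0] [_ [c [c_gt0 sep]]].
have [K K_ge1 frobA_le] := frob2_ubound.
have [d [d_gt0 d_le1 detA_ge]] := det_lbound detA_neq0.
pose c' := Num.min c 1.
have c'_gt0 : 0 < c' by rewrite lt_min c_gt0 ltr01.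
apply: (@strongly_diophantine_of_separation _ _ _ c' K d) => //; first by rewrite ge_min lexx orbT.
move=> h1 h2 t1 t2 eq_size neq_head.
have size2 : size (h2 :: t2) == (size t1).+1 by rewrite /= eq_size.
have /sup_gt [] := sep _ (in_tuple (h1 :: t1)) (Tuple size2) neq_head.
  by exists (dP (phiseq A (h1 :: t1) x0) (phiseq A (h2 :: t2) x0)), x0.
move=> _ [x _ <-] lt_dP; exists x.
exact: le_lt_trans (min1_exprn_le _ c_gt0) lt_dP.
Qed.

Lemma strongly_diophantine_strong_exp_sep :
  (forall i, \det (A i) = 1) -> strongly_diophantine A -> strong_exp_sep A setT.
Proof.
move=> detA1 [c [c_gt0 dioph]].
have [K K_ge1 frobA_le] := frob2_ubound.
pose c' := Num.min c 1.
have c'_gt0 : 0 < c' by rewrite lt_min c_gt0 ltr01.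
apply: (@strong_exp_sep_of_diophantine _ _ _ c' K) => //; first by rewrite ge_min lexx orbT.
move=> s1 s2 eq_size neq.
have size2 : size s2 == size s1 by rewrite eq_size.
exact: le_lt_trans (min1_exprn_le _ c_gt0) (dioph _ (in_tuple s1) (Tuple size2) neq).
Qed.

End FiniteFamilies.

Lemma three_points_setT (R : realType) : three_points [set: R].
Proof.
have pi_gt0 := @pi_gt0 R.
have dP_neq0 x y : sin (x - y) != 0 -> dP x y != 0.
  move=> sin_neq0; rewrite gt_eqF // (lt_le_trans _ (abs_sin_le_dP x y)) //.
  by rewrite normr_gt0.
exists 0, (pi / 4), (pi / 2); split=> //; split; apply: dP_neq0.
- by rewrite sub0r sinN oppr_eq0 sin_pi4 gt_eqF // cos_pi4_gt0.
- have -> : pi / 4 - pi / 2 = - (pi / 4) :> R by field.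
  by rewrite sinN oppr_eq0 sin_pi4 gt_eqF // cos_pi4_gt0.
- by rewrite sub0r sinN sin_pihalf oppr_eq0 oner_neq0.
Qed.

Theorem lemma3p6 (R : realType) :
  (forall (L : finType) (A : L -> 'M[R]_2),
     (forall i, A i \in unitmx) ->
     (exists J : set R, J !=set0 /\ strong_exp_sep A J) ->
     strongly_diophantine A) /\
  (forall (L : finType) (A : L -> 'M[R]_2),
     (forall i, \det (A i) = 1) ->
     ((exists J : set R, three_points J /\ strong_exp_sep A J) <->
      strongly_diophantine A)).
Proof.
split=> [L A unitA [J [J_neq0 sepJ]] | L A detA1].
  have detA_neq0 i : \det (A i) != 0 by rewrite -unitfE -unitmxE.
  exact: strong_exp_sep_strongly_diophantine detA_neq0 J_neq0 sepJ.
have detA_neq0 i : \det (A i) != 0 by rewrite detA1 oner_neq0.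
split=> [[J [[x [y [z [[Jx _ _] _]]]] sepJ]] | dioph].
  by apply: strong_exp_sep_strongly_diophantine detA_neq0 _ sepJ; exists x.
exists setT; split; first exact: three_points_setT.
exact: strongly_diophantine_strong_exp_sep.
Qed.
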